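(* Let $M$ be a matroid, and suppose that $M\cong M_1\mathbin{\Box}\cdots\mathbin{\Box} M_k$ and $M\cong N_1\mathbin{\Box}\cdots\mathbin{\Box} N_r$, where all the matroids $M_i$ and $N_j$ are irreducible (and the factors in each product are taken on pairwise disjoint ground sets). Then $k=r$ and $M_i\cong N_i$ for $1\leq i\leq k$.
   Context: For a matroid $M$ on a finite set $S$ write $\rho_M$ for its rank function, $\rho(M)=\rho_M(S)$, $\nu_M(A)=|A|-\rho_M(A)$ for its nullity function, and $\lambda_M(A)=\rho(M)-\rho_M(A)$ for its rank-lack function. For matroids $M$ on $S$ and $N$ on $T$ with $S\cap T=\emptyset$, the free product $M\mathbin{\Box} N$ is the matroid on $S\cup T$ whose independent sets are those $A\subseteq S\cup T$ such that $A\cap S$ is independent in $M$ and $\lambda_M(A\cap S)\geq \nu_N(A\cap T)$. Free product is associative, so iterated free products need no parentheses. A matroid $M$ is irreducible if it is nonempty (has nonempty ground set) and every factorization of $M$ as a free product of matroids contains $M$ itself as a factor; the empty matroid is not irreducible. *)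

From mathcomp Require Import all_boot.
From Stdlib Require List.
Set Implicit Arguments. Unset Strict Implicit. Unset Printing Implicit Defensive.

(* A set system on a finite ground type: the ground set is the whole type. *)
Record matroid := Matroid { mtype : finType; mindep : {set mtype} -> bool }.
Arguments mindep : clear implicits.

Definition matroid_axioms (M : matroid) : Prop :=
  [/\ mindep M set0,
      (forall A B : {set mtype M}, A \subset B -> mindep M B -> mindep M A) &
      (forall A B : {set mtype M}, mindep M A -> mindep M B -> #|A| < #|B| ->
         exists2 x, x \in B :\: A & mindep M (x |: A))].

Definition mrank (M : matroid) (A : {set mtype M}) : nat :=
  \max_(I : {set mtype M} | (I \subset A) && mindep M I) #|I|.

Definition mrankM (M : matroid) : nat := mrank [set: mtype M].

Definition mnullity (M : matroid) (A : {set mtype M}) : nat := #|A| - mrank A.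

Definition mlack (M : matroid) (A : {set mtype M}) : nat := mrankM M - mrank A.

Definition freeprod (M N : matroid) : matroid :=
  @Matroid (mtype M + mtype N)%type
    (fun A => let AS := [set x | inl x \in A] in
              let AT := [set y | inr y \in A] in
              mindep M AS && (mnullity AT <= mlack AS)).

Definition empty_matroid : matroid := @Matroid void (fun _ => true).

Fixpoint bigfp (s : seq matroid) : matroid :=
  match s with
  | [::] => empty_matroid
  | [:: M] => M
  | M :: s' => freeprod M (bigfp s')
  end.

Definition miso (M N : matroid) : Prop :=
  exists f : mtype M -> mtype N,
    bijective f /\ forall A : {set mtype M}, mindep N (f @: A) = mindep M A.

Definition irreducible (M : matroid) : Prop :=
  0 < #|mtype M| /\
  forall s : seq matroid, (forall N, List.In N s -> matroid_axioms N) ->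
    miso M (bigfp s) ->
    exists s1 N s2, s = s1 ++ N :: s2 /\ miso N M.

(* A set K splits a matroid M when
     ρ(A) = min (ρ(A ∩ K) + |A ∖ K|) (ρ(A ∪ K))   for every A,
   which is the rank function of (M|K) □ (M/K); hence an irreducible matroid has
   only the trivial splitting sets, while the copy of P in P □ Q always splits.
   Splitting sets are closed under intersection and union.
   Let f : P1 □ P2 ≅ Q1 □ Q2 with P1, Q1 irreducible, S the copy of P1 and S' the
   preimage of the copy of Q1.  Then S ∩ S' splits and lies in S, so it is empty
   or S.  If S ⊆ S', f maps S onto the copy of Q1.  If S and S' are disjoint, the
   restrictions to S and S' are uniform, hence single points a and b, and f composed
   with the transposition (a b), an automorphism, maps copy onto copy.  Such an
   isomorphism restricts to P1 ≅ Q1, and to P2 ≅ Q2 because B is independent in P2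
   iff I ∪ B is independent in P1 □ P2 for a basis I of P1.  Induction on the number
   of factors concludes. *)

From mathcomp Require Import all_boot zify perm.
From Stdlib Require List.
Set Implicit Arguments. Unset Strict Implicit. Unset Printing Implicit Defensive.

Ltac set_by_cases :=
  first [apply/setP | apply: eq_card | apply/subsetP] => ?; rewrite !inE;
  repeat match goal with |- context [?x \in ?A] => case: (x \in A) end; done.

Lemma subset_card_eq (T : finType) (A : {set T}) n :
  n <= #|A| -> exists2 B : {set T}, B \subset A & #|B| = n.
Proof.
move=> le_nA; exists [set x in take n (enum A)].
  by apply/subsetP => x; rewrite inE => /mem_take; rewrite mem_enum.
by rewrite cardsE (card_uniqP _) ?take_uniq ?enum_uniq // size_takel -?cardE.
Qed.

Section Rank.
Variable M : matroid.
Implicit Types A B I : {set mtype M}.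

Lemma indep_leq_mrank A I : I \subset A -> mindep M I -> #|I| <= mrank A.
Proof. by move=> sIA indI; apply: (leq_bigmax_cond I); rewrite sIA. Qed.

Lemma mrank_leq_card A : mrank A <= #|A|.
Proof. by apply/bigmax_leqP => I /andP[sIA _]; apply: subset_leq_card. Qed.

Lemma subset_leq_mrank A B : A \subset B -> mrank A <= mrank B.
Proof.
move=> sAB; apply/bigmax_leqP => I /andP[sIA indI].
by apply: indep_leq_mrank indI; apply: subset_trans sAB.
Qed.

Lemma mrank_leq_mrankM A : mrank A <= mrankM M.
Proof. exact/subset_leq_mrank/subsetT. Qed.

Lemma mrank_indep I : mindep M I -> mrank I = #|I|.
Proof. by move=> indI; apply/eqP; rewrite eqn_leq mrank_leq_card indep_leq_mrank. Qed.

Lemma mrank0 : mrank (set0 : {set mtype M}) = 0.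
Proof. by apply/eqP; rewrite -leqn0 -(cards0 (mtype M)) mrank_leq_card. Qed.

Hypothesis indep0 : mindep M set0.

Lemma mrank_basis A : exists I, [/\ I \subset A, mindep M I & #|I| = mrank A].
Proof.
have P0 : (set0 \subset A) && mindep M set0 by rewrite sub0set indep0.
case: (@arg_maxnP _ set0 (fun J => (J \subset A) && mindep M J) (fun J => #|J|) P0).
move=> I /andP[sIA indI] maxI.
exists I; split=> //; apply/eqP; rewrite eqn_leq indep_leq_mrank //=.
exact/bigmax_leqP.
Qed.

Lemma indepE I : mindep M I = (mrank I == #|I|).
Proof.
apply/idP/eqP => [|rankI]; first exact: mrank_indep.
have [J [sJI indJ cardJ]] := mrank_basis I.
by have /eqP <- : J == I by rewrite eqEcard sJI cardJ rankI leqnn.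
Qed.

Lemma mnullity_eq0 A : (mnullity A == 0) = mindep M A.
Proof. by rewrite indepE subn_eq0 eqn_leq mrank_leq_card. Qed.

Hypothesis indep_sub : forall A B, A \subset B -> mindep M B -> mindep M A.

Lemma mrank_leq_setD A B : mrank A <= mrank B + #|A :\: B|.
Proof.
apply/bigmax_leqP => I /andP[sIA indI]; rewrite -(cardsID B I).
apply: leq_add; last exact/subset_leq_card/setSD.
by apply: indep_leq_mrank (subsetIr _ _) _; apply: indep_sub indI; apply: subsetIl.
Qed.

End Rank.

Lemma mrank_embed (N Z : matroid) (h : mtype N -> mtype Z) :
  injective h -> (forall A : {set mtype N}, mindep Z (h @: A) = mindep N A) ->
  forall A : {set mtype N}, mrank (h @: A) = mrank A.
Proof.
move=> inj_h indep_h A; apply/eqP; rewrite eqn_leq; apply/andP; split; last first.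
  apply/bigmax_leqP => I /andP[sIA indI]; rewrite -(card_imset _ inj_h).
  by apply: indep_leq_mrank; [apply: imsetS | rewrite indep_h].
apply/bigmax_leqP => J /andP[sJ indJ].
have eJ : h @: (h @^-1: J) = J.
  apply/setP => y; apply/imsetP/idP => [[x + ->]|yJ]; first by rewrite inE.
  by move: (yJ) => /(subsetP sJ)/imsetP[x _ ey]; exists x; rewrite // inE -ey.
rewrite -eJ (card_imset _ inj_h); apply: indep_leq_mrank; last by rewrite -indep_h eJ.
by apply/subsetP => x; rewrite inE => /(subsetP sJ); rewrite mem_imset.
Qed.

Definition splitting (M : matroid) (K : {set mtype M}) : Prop :=
  forall A, mrank A = minn (mrank (A :&: K) + #|A :\: K|) (mrank (A :|: K)).

Section Splitting.
Variable M : matroid.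
Implicit Types A K S : {set mtype M}.
Hypothesis indep_sub : forall A B : {set mtype M}, A \subset B -> mindep M B -> mindep M A.

Lemma splittingP K :
  (forall A, minn (mrank (A :&: K) + #|A :\: K|) (mrank (A :|: K)) <= mrank A) ->
  splitting K.
Proof.
move=> ge_rank A; apply/eqP; rewrite eqn_leq ge_rank andbT leq_min.
rewrite subset_leq_mrank ?subsetUl // andbT.
have -> : A :\: K = A :\: (A :&: K) by set_by_cases.
exact: mrank_leq_setD.
Qed.

Lemma splittingI S S' : splitting S -> splitting S' -> splitting (S :&: S').
Proof.
move=> splitS splitS'; apply: splittingP => A.
have := splitS A; have := splitS' (A :&: S).
have -> : A :&: S :&: S' = A :&: (S :&: S') by rewrite setIA.
have -> : #|A :\: (S :&: S')| = #|(A :&: S) :\: S'| + #|A :\: S|.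
  rewrite -(cardsID S (A :\: (S :&: S'))); congr (_ + _); set_by_cases.
have : mrank (A :|: (S :&: S')) <= mrank (A :|: S).
  by apply/subset_leq_mrank/setUS/subsetIl.
have : mrank (A :|: (S :&: S')) <= mrank ((A :&: S) :|: S') + #|A :\: S|.
  apply: leq_trans (mrank_leq_setD indep_sub _ ((A :&: S) :|: S')) _.
  by rewrite leq_add2l; apply: subset_leq_card; set_by_cases.
lia.
Qed.

Lemma splittingU S S' : splitting S -> splitting S' -> splitting (S :|: S').
Proof.
move=> splitS splitS'; apply: splittingP => A.
have := splitS A; have := splitS' (A :|: S); rewrite -setUA.
have : mrank (A :&: (S :|: S')) + #|A :\: (S :|: S')| <= mrank (A :&: S) + #|A :\: S|.
  apply: leq_trans (leq_add (mrank_leq_setD indep_sub _ (A :&: S)) (leqnn _)) _.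
  rewrite -addnA leq_add2l -(cardsID S' (A :\: S)); apply: eq_leq.
  by congr (_ + _); set_by_cases.
have : mrank (A :&: (S :|: S')) + #|A :\: (S :|: S')| <=
       mrank ((A :|: S) :&: S') + #|(A :|: S) :\: S'|.
  apply: leq_trans (leq_add (mrank_leq_setD indep_sub _ ((A :|: S) :&: S')) (leqnn _)) _.
  rewrite -addnA leq_add2l -(cardsID (A :\: (S :|: S')) ((A :|: S) :\: S')).
  have -> : ((A :|: S) :\: S') :&: (A :\: (S :|: S')) = A :\: (S :|: S') by set_by_cases.
  by rewrite addnC leq_add2l; apply: subset_leq_card; set_by_cases.
lia.
Qed.

End Splitting.

Lemma splitting_disjoint_uniform (M : matroid) (S S' : {set mtype M}) :
  splitting S -> splitting S' -> [disjoint S & S'] -> 0 < #|S'| ->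
  forall Y : {set mtype M}, Y \subset S -> mrank Y = minn #|Y| (mrank (S :|: S')).
Proof.
move=> splitS splitS' dis_SS' S'_gt0 Y sYS.
have dis_S'S : [disjoint S' & S] by rewrite disjoint_sym.
have dis_YS' : [disjoint Y & S'] := disjointWl sYS dis_SS'.
have /eqP YS0 : Y :\: S == set0 by rewrite setD_eq0.
have := splitS' Y; have := splitS (Y :|: S'); have := mrank_leq_card Y.
rewrite (disjoint_setI0 dis_YS') (setDidPl dis_YS') mrank0.
rewrite setIUl (setIidPl sYS) (disjoint_setI0 dis_S'S) setU0.
rewrite setDUl YS0 set0U (setDidPl dis_S'S).
rewrite setUAC (setUidPr sYS) setUC.
lia.
Qed.

Definition misom (M N : matroid) (f : mtype M -> mtype N) : Prop :=
  bijective f /\ forall A : {set mtype M}, mindep N (f @: A) = mindep M A.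

Section Isomorphism.
Variables M N : matroid.
Variable f : mtype M -> mtype N.
Hypothesis iso_f : misom f.
Implicit Types A K : {set mtype M}.

Lemma misom_inv g : cancel f g -> cancel g f -> misom g.
Proof.
move=> fK gK; split; first by exists f.
by move=> B; rewrite -iso_f.2 -imset_comp (eq_imset _ gK) imset_id.
Qed.

Lemma misom_mrank A : mrank (f @: A) = mrank A.
Proof. exact/mrank_embed/iso_f.2/bij_inj/iso_f.1. Qed.

Lemma misom_splitting K : splitting K -> splitting (f @: K).
Proof.
move=> split_K B; have [g fK gK] := iso_f.1.
have im_pre X : f @: X = g @^-1: X := can2_imset_pre _ fK gK.
have -> : B = f @: (g @: B) by rewrite -imset_comp (eq_imset _ gK) imset_id.
move: (g @: B) => A; rewrite !im_pre -preimsetI -preimsetD -preimsetU -!im_pre.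
by rewrite !misom_mrank (card_imset _ (can_inj fK)).
Qed.

End Isomorphism.

Lemma misom_comp (M N R : matroid) (f : mtype M -> mtype N) (g : mtype N -> mtype R) :
  misom f -> misom g -> misom (g \o f).
Proof.
move=> [bij_f indep_f] [bij_g indep_g]; split; first exact: bij_comp.
by move=> A; rewrite imset_comp indep_g indep_f.
Qed.

Lemma miso_refl (M : matroid) : miso M M.
Proof. by exists id; split=> [|A]; [exists id | rewrite imset_id]. Qed.

Lemma miso_sym (M N : matroid) : miso M N -> miso N M.
Proof. by case=> f iso_f; have [g fK gK] := iso_f.1; exists g; apply: misom_inv fK gK. Qed.

Lemma miso_trans (M N R : matroid) : miso M N -> miso N R -> miso M R.
Proof. by case=> f iso_f [g iso_g]; exists (g \o f); apply: misom_comp. Qed.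

Lemma miso_card (M N : matroid) : miso M N -> #|mtype M| = #|mtype N|.
Proof. by case=> f [bij_f _]; exact: bij_eq_card bij_f. Qed.

Lemma matroid_axioms_contract (Z N : matroid) (h : mtype N -> mtype Z) (I : {set mtype Z}) :
  injective h -> (forall x, h x \notin I) -> mindep Z I -> matroid_axioms Z ->
  (forall A : {set mtype N}, mindep N A = mindep Z (h @: A :|: I)) -> matroid_axioms N.
Proof.
move=> inj_h dis_hI indI [_ indep_sub exchange] indep_h.
have card_hI (A : {set mtype N}) : #|h @: A :|: I| = #|A| + #|I|.
  rewrite cardsU (card_imset _ inj_h) (disjoint_setI0 _) ?cards0 ?subn0 //.
  by rewrite disjoint_subset; apply/subsetP => _ /imsetP[x _ ->]; rewrite inE.
split=> [|A B sAB|A B].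
- by rewrite indep_h imset0 set0U.
- by rewrite !indep_h; apply: indep_sub; apply/setSU/imsetS.
rewrite !indep_h => indA indB ltAB.
have [|z] := exchange _ _ indA indB; first by rewrite !card_hI ltn_add2r.
rewrite !inE => /andP[znA /orP[/imsetP[y yB zE]|zI]]; last by rewrite zI orbT in znA.
rewrite {z}zE in znA * => indy; exists y; last by rewrite indep_h imsetU1 -setUA.
by rewrite inE yB andbT; apply: contra znA => yA; rewrite imset_f.
Qed.

Lemma miso_axioms (M N : matroid) : miso M N -> matroid_axioms M -> matroid_axioms N.
Proof.
case/miso_sym => g [bij_g indep_g] axM.
apply: (matroid_axioms_contract (I := set0) (bij_inj bij_g)) => //.
- by move=> x; rewrite inE.
- by case: axM.
- by move=> A; rewrite setU0 indep_g.
Qed.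



Section SumSets.
Variables T1 T2 : finType.
Implicit Types (B : {set T1}) (C : {set T2}) (A : {set T1 + T2}).

Lemma inl_in_inl B x : (@inl T1 T2 x \in inl @: B) = (x \in B).
Proof. by rewrite mem_imset //; move=> ? ? []. Qed.

Lemma inr_in_inr C y : (@inr T1 T2 y \in inr @: C) = (y \in C).
Proof. by rewrite mem_imset //; move=> ? ? []. Qed.

Lemma inl_in_inr C x : (@inl T1 T2 x \in inr @: C) = false.
Proof. by apply/imsetP => -[]. Qed.

Lemma inr_in_inl B y : (@inr T1 T2 y \in inl @: B) = false.
Proof. by apply/imsetP => -[]. Qed.

Definition sumE := (inl_in_inl, inr_in_inr, inl_in_inr, inr_in_inl).

Lemma preim_inl_sum B C : inl @^-1: (inl @: B :|: inr @: C) = B.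
Proof. by apply/setP => x; rewrite !inE !sumE orbF. Qed.

Lemma preim_inr_sum B C : inr @^-1: (inl @: B :|: inr @: C) = C.
Proof. by apply/setP => y; rewrite !inE !sumE. Qed.

Lemma sumset_decomp A : A = inl @: (inl @^-1: A) :|: inr @: (inr @^-1: A).
Proof. by apply/setP => -[x|y]; rewrite !inE !sumE ?inE ?orbF. Qed.

Lemma card_sumset A : #|A| = #|inl @^-1: A| + #|inr @^-1: A|.
Proof.
rewrite {1}(sumset_decomp A) cardsU !card_imset; try by move=> ? ? [].
rewrite (disjoint_setI0 _) ?cards0 ?subn0 // disjoint_subset.
by apply/subsetP => -[x|y]; rewrite !inE !sumE.
Qed.

Lemma card_imset_sum B C : #|inl @: B :|: inr @: C| = #|B| + #|C|.
Proof. by rewrite card_sumset preim_inl_sum preim_inr_sum. Qed.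

End SumSets.

Section FreeProduct.
Variables P Q : matroid.
Local Notation PQ := (freeprod P Q).
Implicit Types (B I : {set mtype P}) (C : {set mtype Q}) (A : {set mtype PQ}).

Definition lside : {set mtype PQ} := inl @: setT.

Lemma preim_inl_lside : inl @^-1: lside = setT.
Proof. by apply/setP => x; rewrite !inE sumE inE. Qed.

Lemma preim_inr_lside : inr @^-1: lside = set0.
Proof. by apply/setP => y; rewrite !inE sumE. Qed.

Lemma card_lside : #|lside| = #|mtype P|.
Proof. by rewrite card_imset ?cardsT //; move=> ? ? []. Qed.

Lemma sub_lside_imset A : A \subset lside -> A = inl @: (inl @^-1: A).
Proof.
move=> sA; apply/setP => -[x|y]; rewrite ?sumE ?inE //.
by apply/negP => /(subsetP sA); rewrite sumE.
Qed.

Lemma mindep_fp A :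
  mindep PQ A = mindep P (inl @^-1: A) && (mnullity (inr @^-1: A) <= mlack (inl @^-1: A)).
Proof. by []. Qed.

Lemma mindep_fp_sum B C :
  mindep PQ (inl @: B :|: inr @: C) = mindep P B && (mnullity C <= mlack B).
Proof. by rewrite mindep_fp preim_inl_sum preim_inr_sum. Qed.

Lemma mindep_fp_inl B : mindep PQ (inl @: B) = mindep P B.
Proof. by have := mindep_fp_sum B set0; rewrite imset0 setU0 /mnullity cards0 andbT. Qed.

Lemma mrank_fp_inl B : mrank (inl @: B : {set mtype PQ}) = mrank B.
Proof.
apply: (@mrank_embed P PQ inl); first by move=> ? ? [].
by move=> B'; exact (mindep_fp_inl B').
Qed.

Lemma mindep_fp_basis I C : mrank I = mrankM P ->
  mindep PQ (inl @: I :|: inr @: C) = mindep P I && (mnullity C == 0).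
Proof. by move=> rankI; rewrite mindep_fp_sum /mlack rankI subnn leqn0. Qed.

Lemma mindep_fp0 : mindep P set0 -> mindep PQ set0.
Proof. by rewrite mindep_fp !preimset0 /mnullity cards0 => ->. Qed.

Lemma mrank_fp_leq A :
  mrank A <= minn (mrank (inl @^-1: A) + #|inr @^-1: A|) (mrankM P + mrank (inr @^-1: A)).
Proof.
apply/bigmax_leqP => I /andP[sIA]; rewrite mindep_fp /mnullity /mlack.
set IS := inl @^-1: I; set IT := inr @^-1: I; set AS := inl @^-1: A; set AT := inr @^-1: A.
move=> /andP[indIS].
have cardI : #|I| = #|IS| + #|IT| := card_sumset I.
have sIS : IS \subset AS by apply: preimsetS.
have sIT : IT \subset AT by apply: preimsetS.
have := indep_leq_mrank sIS indIS; have := subset_leq_card sIT.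
have := subset_leq_mrank sIT; have := mrank_indep indIS.
have := mrank_leq_mrankM IS; have := mrank_leq_card IT.
rewrite cardI leq_min; lia.
Qed.

Hypotheses (indepP0 : mindep P set0) (indepQ0 : mindep Q set0).

Lemma mrank_fp_geq A :
  minn (mrank (inl @^-1: A) + #|inr @^-1: A|) (mrankM P + mrank (inr @^-1: A)) <= mrank A.
Proof.
set AS := inl @^-1: A; set AT := inr @^-1: A.
have [JS [sJS indJS cardJS]] := mrank_basis indepP0 AS.
have [JT [sJT indJT cardJT]] := mrank_basis indepQ0 AT.
have [L sL cardL] : exists2 L : {set mtype Q},
    L \subset AT :\: JT & #|L| = minn (mrankM P - mrank AS) (#|AT| - #|JT|).
  by apply: subset_card_eq; rewrite cardsD (setIidPr sJT) geq_minr.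
have cardJTL : #|JT :|: L| = #|JT| + #|L|.
  rewrite cardsU (disjoint_setI0 _) ?cards0 ?subn0 // disjoint_sym.
  apply: disjointWl sL _; rewrite disjoint_subset; apply/subsetP => x.
  by rewrite !inE; case/andP.
have sI : inl @: JS :|: inr @: (JT :|: L) \subset A.
  apply: subset_trans (_ : _ \subset inl @: AS :|: inr @: AT) _.
    by apply: setUSS; apply: imsetS; rewrite // subUset sJT (subset_trans sL) ?subsetDl.
  by rewrite /AS /AT -sumset_decomp.
have indI : mindep PQ (inl @: JS :|: inr @: (JT :|: L)).
  rewrite mindep_fp_sum indJS /mnullity /mlack cardJTL.
  have := subset_leq_mrank (subsetUl JT L); have := mrank_indep indJT; have := mrank_indep indJS.
  by have := mrank_leq_mrankM AS; lia.
apply: leq_trans (@indep_leq_mrank PQ A _ sI indI); rewrite card_imset_sum cardJTL.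
by have := mrank_leq_card AT; have := mrank_leq_mrankM AS; lia.
Qed.

Lemma mrank_fp A :
  mrank A = minn (mrank (inl @^-1: A) + #|inr @^-1: A|) (mrankM P + mrank (inr @^-1: A)).
Proof. by apply/eqP; rewrite eqn_leq mrank_fp_leq mrank_fp_geq. Qed.

Lemma lside_splitting : splitting lside.
Proof.
move=> A; rewrite !mrank_fp (card_sumset (A :\: _)) !(preimsetI, preimsetD, preimsetU).
rewrite preim_inl_lside preim_inr_lside setIT setI0 setDT setD0 setUT setU0 !cards0 mrank0.
rewrite -/(mrankM P).
set AS := inl @^-1: A; set AT := inr @^-1: A.
by have := mrank_leq_card AT; have := mrank_leq_mrankM AS; lia.
Qed.

Lemma fp_right_axioms : matroid_axioms PQ -> matroid_axioms Q.
Proof.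
move=> axPQ; have [I [_ indI cardI]] := mrank_basis indepP0 [set: mtype P].
have rankI : mrank I = mrankM P by rewrite mrank_indep.
apply: (@matroid_axioms_contract PQ Q inr (inl @: I)) => //.
- by move=> ? ? [].
- by move=> y; rewrite sumE.
- by rewrite mindep_fp_inl.
- by move=> C; rewrite setUC mindep_fp_basis // indI (mnullity_eq0 indepQ0).
Qed.

End FreeProduct.

Lemma indep_augment (M : matroid) (I L : {set mtype M}) :
  matroid_axioms M -> mindep M I -> mindep M L -> #|I| <= #|L| ->
  exists J : {set mtype M}, [/\ I \subset J, J \subset I :|: L, mindep M J & #|J| = #|L|].
Proof.
move=> [_ _ exchange]; move: {2}(#|L| - #|I|) (erefl (#|L| - #|I|)) => n.
elim: n I => [|n IHn] I gapI indI indL leIL.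
  by exists I; split; rewrite ?subsetUl //; lia.
have [|x /setDP[xL xnI] indxI] := exchange _ _ indI indL; first lia.
have cardxI : #|x |: I| = #|I|.+1 by rewrite cardsU1 xnI.
have [||J [sxIJ sJ indJ cardJ]] := IHn (x |: I) _ indxI indL; rewrite ?cardxI; try lia.
exists J; split=> //; first by apply: subset_trans sxIJ; apply: subsetUr.
by apply: subset_trans sJ _; rewrite -setUA subUset sub1set inE xL orbT subxx.
Qed.

Definition restrict (P : matroid) (K : {set mtype P}) : matroid :=
  @Matroid {x | x \in K} (fun A => mindep P (val @: A)).

(* The contraction [P / K] restricted to the complement of [K], computed
   through a basis [I] of [K]. *)
Definition contract (P : matroid) (K I : {set mtype P}) : matroid :=
  @Matroid {x | x \notin K} (fun B => mindep P (val @: B :|: I)).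

Section Decomposition.
Variable P : matroid.
Hypothesis axP : matroid_axioms P.
Variables K I : {set mtype P}.
Hypotheses (sIK : I \subset K) (indI : mindep P I) (cardI : #|I| = mrank K).
Let indep0 : mindep P set0. Proof. by case: axP. Qed.
Let indep_sub : forall A B : {set mtype P}, A \subset B -> mindep P B -> mindep P A.
Proof. by case: axP. Qed.

Lemma restrict_axioms : matroid_axioms (restrict K).
Proof.
apply: (@matroid_axioms_contract P (restrict K) val set0 val_inj) => // [x|A].
  by rewrite inE.
by rewrite setU0.
Qed.

Lemma val_notin_basis (y : {x | x \notin K}) : val y \notin I.
Proof. by apply: contra (valP y); apply: (subsetP sIK). Qed.

Lemma contract_axioms : matroid_axioms (contract K I).
Proof. exact: (@matroid_axioms_contract P (contract K I) val I val_inj val_notin_basis). Qed.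

Lemma mrank_restrict (A : {set mtype (restrict K)}) : mrank A = mrank (val @: A).
Proof. by rewrite (@mrank_embed (restrict K) P val val_inj). Qed.

Lemma mrankM_restrict : mrankM (restrict K) = mrank K.
Proof.
rewrite /mrankM mrank_restrict; congr mrank; apply/setP => x.
by apply/imsetP/idP => [[y _ ->]|xK]; [apply: valP | exists (exist _ x xK)].
Qed.

Lemma card_contract_basis (B : {set mtype (contract K I)}) : #|val @: B :|: I| = #|B| + #|I|.
Proof.
rewrite cardsU (card_imset _ val_inj) (disjoint_setI0 _) ?cards0 ?subn0 //.
by rewrite disjoint_subset; apply/subsetP => _ /imsetP[y _ ->]; rewrite inE val_notin_basis.
Qed.

Lemma mrank_contract_leq (B : {set mtype (contract K I)}) :
  mrank B + mrank K <= mrank (val @: B :|: K).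
Proof.
have [contract0 _ _] := contract_axioms.
have [J [sJB indJ <-]] := mrank_basis contract0 B.
rewrite -cardI -card_contract_basis; apply: (@indep_leq_mrank P); last exact: indJ.
exact/setUSS/sIK/imsetS.
Qed.

Lemma mrank_contract_geq (B : {set mtype (contract K I)}) :
  mrank (val @: B :|: K) <= mrank B + mrank K.
Proof.
have [L [sL indL cardL]] := mrank_basis indep0 (val @: B :|: K).
have [|J [sIJ sJ indJ cardJ]] := indep_augment axP indI indL.
  by rewrite cardI cardL; apply/subset_leq_mrank/subsetUr.
have JK_I x : x \in J -> x \in K -> x \in I.
  move=> xJ xK; apply: contraT => xnI.
  have : #|x |: I| <= mrank K.
    apply: indep_leq_mrank; first by rewrite subUset sub1set xK.
    by apply: indep_sub indJ; rewrite subUset sub1set xJ.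
  by rewrite cardsU1 xnI -cardI ltnn.
pose J' := [set y : mtype (contract K I) | val y \in J].
have eJ : val @: J' :|: I = J.
  apply/setP => x; rewrite inE; apply/idP/idP => [/orP[/imsetP[y + ->]|/(subsetP sIJ)//]|xJ].
    by rewrite inE.
  case xK: (x \in K); first by rewrite JK_I ?orbT.
  by apply/orP; left; apply/imsetP; exists (exist _ x (negbT xK)); rewrite ?inE.
have sJ'B : J' \subset B.
  apply/subsetP => y; rewrite inE => /(subsetP sJ).
  rewrite inE => /orP[/(subsetP sIK)|/(subsetP sL)]; first by rewrite (negbTE (valP y)).
  by rewrite inE (negbTE (valP y)) orbF mem_imset //; apply: val_inj.
have indJ' : mindep (contract K I) J' by rewrite [mindep _ _]/= eJ.
have := indep_leq_mrank sJ'B indJ'.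
by have := card_contract_basis J'; rewrite eJ cardJ cardL cardI; lia.
Qed.

Lemma mrank_contract (B : {set mtype (contract K I)}) :
  mrank B + mrank K = mrank (val @: B :|: K).
Proof. by apply/eqP; rewrite eqn_leq mrank_contract_leq mrank_contract_geq. Qed.

Hypothesis split_K : splitting K.
Local Notation RC := (freeprod (restrict K) (contract K I)).
Implicit Types A : {set mtype RC}.

Definition glue (z : mtype RC) : mtype P :=
  match z with inl x => val x | inr y => val y end.

Lemma glue_bij : bijective glue.
Proof.
apply: inj_card_bij.
  move=> [x|x] [y|y] //= => [/val_inj->|exy|exy|/val_inj->] //.
  - by have := valP y; rewrite /= -exy (valP x).
  - by have := valP x; rewrite /= exy (valP y).
by rewrite card_sum !card_sig -(cardsC K) cardsE; apply: eq_leq; congr (_ + _).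
Qed.

Lemma glue_imset A : glue @: A = val @: (inl @^-1: A) :|: val @: (inr @^-1: A).
Proof. by rewrite {1}(sumset_decomp A) imsetU -!imset_comp. Qed.

Lemma mrank_glue A : mrank (glue @: A) = mrank A.
Proof.
have [restrict0 _ _] := restrict_axioms; have [contract0 _ _] := contract_axioms.
rewrite (mrank_fp restrict0 contract0) split_K glue_imset.
set AS := inl @^-1: A; set AT := inr @^-1: A.
have sASK : val @: AS \subset K by apply/subsetP => _ /imsetP[x _ ->]; apply: valP.
have dis_ATK : [disjoint val @: AT & K].
  by rewrite disjoint_subset; apply/subsetP => _ /imsetP[y _ ->]; rewrite inE (valP y).
have /eqP ASK0 : val @: AS :\: K == set0 by rewrite setD_eq0.
rewrite setIUl setDUl setUAC (setUidPr sASK) (setIidPl sASK) (disjoint_setI0 dis_ATK).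
rewrite ASK0 (setDidPl dis_ATK) setU0 set0U mrank_restrict (card_imset _ val_inj).
by rewrite [K :|: _]setUC -mrank_contract mrankM_restrict [mrank K + _]addnC.
Qed.

Lemma glue_misom : misom glue.
Proof.
split=> [|A]; first exact: glue_bij.
have [restrict0 _ _] := restrict_axioms.
rewrite (indepE indep0) (indepE (mindep_fp0 _ restrict0)) mrank_glue.
by rewrite (card_imset _ (bij_inj glue_bij)).
Qed.

End Decomposition.

Lemma irreducible_splitting (P : matroid) (K : {set mtype P}) :
  matroid_axioms P -> irreducible P -> splitting K -> K = set0 \/ K = setT.
Proof.
move=> axP [_ irrP] split_K; have [indep0 _ _] := axP.
have [I [sIK indI cardI]] := mrank_basis indep0 K.
have axioms_factors : forall N, List.In N [:: restrict K; contract K I] -> matroid_axioms N.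
  by move=> N [<-|[<-|[]]]; [apply: restrict_axioms | apply: contract_axioms].
have iso_glue := glue_misom axP sIK indI cardI split_K.
have [s1 [N [s2 [eN isoN]]]] := irrP _ axioms_factors (miso_sym (ex_intro _ _ iso_glue)).
have cardK : #|K| + #|~: K| = #|mtype P| by rewrite cardsC.
have := miso_card isoN; case: s1 eN => [|N1 [|N2 s1]] /= [].
- move=> <- _; rewrite card_sig => cardN.
  by right; apply/eqP; rewrite eqEcard subsetT cardsT -cardN; apply/eq_leq/eq_card.
- move=> _ <- _; rewrite card_sig => cardN.
  have : #|~: K| = #|mtype P| by rewrite -cardN; apply: eq_card => x; rewrite inE.
  by left; apply: cards0_eq; lia.
- by move=> _ _; case: s1.
Qed.

Lemma splitting_inl (P Q : matroid) (K : {set mtype (freeprod P Q)}) :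
  splitting K -> K \subset lside P Q -> splitting (inl @^-1: K).
Proof.
move=> split_K sK A; set K' := inl @^-1: K.
have := split_K (inl @: A); rewrite (sub_lside_imset sK) -imsetU -imsetI; last by move=> ? ? ? ? [].
have -> : inl @: A :\: inl @: K' = inl @: (A :\: K') :> {set mtype (freeprod P Q)}.
  by apply/setP => -[x|y]; rewrite !inE !sumE ?inE.
by rewrite !mrank_fp_inl card_imset //; move=> ? ? [].
Qed.

Lemma irreducible_lside_splitting (P Q : matroid) (K : {set mtype (freeprod P Q)}) :
  matroid_axioms P -> irreducible P -> splitting K -> K \subset lside P Q ->
  K = set0 \/ K = lside P Q.
Proof.
move=> axP irrP split_K sK; rewrite (sub_lside_imset sK).
by case: (irreducible_splitting axP irrP (splitting_inl split_K sK)) => ->; [left|right];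
  rewrite ?imset0.
Qed.

Lemma irreducible_uniform (P : matroid) (c : nat) :
  matroid_axioms P -> irreducible P -> (forall Y : {set mtype P}, mrank Y = minn #|Y| c) ->
  forall x y : mtype P, x = y.
Proof.
move=> axP irrP uniform x y; apply/eqP/negPn/negP => nxy.
have split_x : splitting [set x].
  move=> A; rewrite !uniform.
  by have := cardsID [set x] A; have := subset_leq_card (subsetUl A [set x]); lia.
case: (irreducible_splitting axP irrP split_x) => /setP; first by move/(_ x); rewrite !inE eqxx.
by move/(_ y); rewrite !inE eq_sym (negbTE nxy).
Qed.

Lemma lside_singleton (P Q : matroid) (S' : {set mtype (freeprod P Q)}) :
  matroid_axioms P -> irreducible P -> mindep Q set0 ->
  splitting S' -> [disjoint lside P Q & S'] -> 0 < #|S'| ->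
  exists t, lside P Q = [set inl t].
Proof.
move=> axP irrP indepQ0 split_S' dis S'_gt0; have [indepP0 _ _] := axP.
have uniform := splitting_disjoint_uniform (lside_splitting indepP0 indepQ0) split_S' dis S'_gt0.
have P_subsingleton := irreducible_uniform (c := mrank (lside P Q :|: S')) axP irrP.
have [t _] : exists t, t \in [set: mtype P] by apply/card_gt0P; rewrite cardsT; case: irrP.
exists t; apply/setP => -[x|y]; rewrite !inE sumE //= inE eqE /= (P_subsingleton _ x t) ?eqxx //.
move=> Y; rewrite -(mrank_fp_inl Q) uniform ?card_imset //; first by move=> ? ? [].
by apply: imsetS; apply: subsetT.
Qed.

Section Involution.
Variable M : matroid.
Variable U : {set mtype M}.
Variable s : mtype M -> mtype M.
Implicit Types A B : {set mtype M}.
Hypotheses (split_U : splitting U) (sK : involutive s).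
Hypothesis s_out : forall x, x \notin U -> s x = x.
Hypothesis mrank_sU : forall B : {set mtype M}, B \subset U -> mrank (s @: B) = mrank B.

Lemma preimset_support : s @^-1: U = U.
Proof.
apply/setP => x; rewrite inE; apply/idP/idP; apply: contraTT.
  by move=> xnU; rewrite s_out.
by move=> sxnU; rewrite -(sK x) (s_out sxnU).
Qed.

Lemma splitting_involutive_mrank A : mrank (s @: A) = mrank A.
Proof.
have im_pre X : s @: X = s @^-1: X := can2_imset_pre _ sK sK.
have preD : s @^-1: A :\: U = A :\: U.
  by apply/setP => x; rewrite !inE; case: (boolP (x \in U)) => //= xnU; rewrite s_out.
have preU : s @^-1: A :|: U = A :|: U.
  by apply/setP => x; rewrite !inE; case: (boolP (x \in U)) => [|xnU]; rewrite ?orbT ?orbF ?s_out.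
have eI : s @: A :&: U = s @: (A :&: U) by rewrite !im_pre preimsetI preimset_support.
by rewrite (split_U (s @: A)) (split_U A) eI mrank_sU ?subsetIr // im_pre preD preU.
Qed.

End Involution.

Section Transposition.
Variable M : matroid.
Hypotheses (indep0 : mindep M set0)
  (indep_sub : forall A B : {set mtype M}, A \subset B -> mindep M B -> mindep M A).
Variables a b : mtype M.
Hypotheses (nab : a != b) (split_a : splitting [set a]) (split_b : splitting [set b]).

Lemma mrank_sub_pair (B : {set mtype M}) : B \subset [set a; b] -> B != [set a; b] ->
  mrank B = minn #|B| (mrank [set a; b]).
Proof.
move=> sB nB; have dis_ab : [disjoint [set a] & [set b]] by rewrite disjoints1 inE.
have /properP[_ [x]] : B \proper [set a; b] by rewrite properEneq nB sB.
rewrite !inE => /orP[] /eqP-> xnB.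
- have sBb : B \subset [set b].
    apply/subsetP => y yB; have := subsetP sB y yB; rewrite !inE.
    by case/orP => // /eqP eya; rewrite -eya yB in xnB.
  rewrite (splitting_disjoint_uniform split_b split_a _ _ sBb) ?cards1 1?setUC //.
  by rewrite disjoint_sym.
- have sBa : B \subset [set a].
    apply/subsetP => y yB; have := subsetP sB y yB; rewrite !inE.
    by case/orP => // /eqP eyb; rewrite -eyb yB in xnB.
  by rewrite (splitting_disjoint_uniform split_a split_b _ _ sBa) ?cards1.
Qed.

Lemma tperm_misom : misom (tperm a b).
Proof.
have split_ab : splitting [set a; b] := splittingU indep_sub split_a split_b.
have tperm_out x : x \notin [set a; b] -> tperm a b x = x.
  by rewrite !inE negb_or => /andP[xa xb]; rewrite tpermD // eq_sym.
have tperm_ab : tperm a b @: [set a; b] = [set a; b].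
  by rewrite imsetU1 imset_set1 tpermL tpermR setUC.
have mrank_tperm_sub (B : {set mtype M}) : B \subset [set a; b] -> mrank (tperm a b @: B) = mrank B.
  move=> sB; case: (eqVneq B [set a; b]) => [->|nB]; first by rewrite tperm_ab.
  have sB' : tperm a b @: B \subset [set a; b] by rewrite -tperm_ab imsetS.
  have nB' : tperm a b @: B != [set a; b] by rewrite -tperm_ab (inj_eq (imset_inj perm_inj)).
  by rewrite (mrank_sub_pair sB' nB') (mrank_sub_pair sB nB) card_imset //; apply: perm_inj.
split=> [|A]; first by exists (tperm a b); apply: tpermK.
rewrite !(indepE indep0) card_imset; last exact: perm_inj.
by rewrite (splitting_involutive_mrank split_ab (tpermK a b) tperm_out mrank_tperm_sub).
Qed.

End Transposition.

Lemma sum_map_sides (T1 T2 U1 U2 : finType) (phi : T1 + T2 -> U1 + U2) :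
  (forall z, (phi z \in inl @: setT) = (z \in inl @: setT)) ->
  exists g1 g2, (forall x, phi (inl x) = inl (g1 x)) /\ (forall y, phi (inr y) = inr (g2 y)).
Proof.
move=> side_phi.
have /fin_all_exists[g1 e1] x : exists u, phi (inl x) = inl u.
  have := side_phi (inl x); rewrite sumE inE.
  by case: (phi (inl x)) => u; rewrite sumE //; exists u.
have /fin_all_exists[g2 e2] y : exists v, phi (inr y) = inr v.
  have := side_phi (inr y); rewrite sumE.
  by case: (phi (inr y)) => v; rewrite sumE ?inE //; exists v.
by exists g1, g2.
Qed.

Section Components.
Variables P1 P2 Q1 Q2 : matroid.
Local Notation X := (freeprod P1 P2).
Local Notation Y := (freeprod Q1 Q2).

Definition side_preserving (phi : mtype X -> mtype Y) : Prop :=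
  forall z, (phi z \in lside Q1 Q2) = (z \in lside P1 P2).

Variable phi : (mtype P1 + mtype P2)%type -> (mtype Q1 + mtype Q2)%type.
Hypotheses (iso_phi : @misom X Y phi) (side_phi : side_preserving phi).
Hypotheses (P1_0 : mindep P1 set0) (P2_0 : mindep P2 set0) (Q2_0 : mindep Q2 set0).

Lemma misom_fp_components : miso P1 Q1 /\ miso P2 Q2.
Proof.
have indep_phi (A : {set mtype P1 + mtype P2}) : mindep Y (phi @: A) = mindep X A := iso_phi.2 A.
have [psi phiK psiK] := iso_phi.1.
have side_psi z : (psi z \in lside P1 P2) = (z \in lside Q1 Q2) by rewrite -side_phi psiK.
have [g1 [g2 [phi1 phi2]]] := sum_map_sides side_phi.
have [k1 [k2 [psi1 psi2]]] := sum_map_sides side_psi.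
have g1K : cancel g1 k1 by move=> x; apply: (@inl_inj _ (mtype P2)); rewrite -psi1 -phi1 phiK.
have k1K : cancel k1 g1 by move=> x; apply: (@inl_inj _ (mtype Q2)); rewrite -phi1 -psi1 psiK.
have g2K : cancel g2 k2 by move=> y; apply: (@inr_inj (mtype P1)); rewrite -psi2 -phi2 phiK.
have k2K : cancel k2 g2 by move=> y; apply: (@inr_inj (mtype Q1)); rewrite -phi2 -psi2 psiK.
have phi_sum (B : {set mtype P1}) (C : {set mtype P2}) :
    phi @: (inl @: B :|: inr @: C) = inl @: (g1 @: B) :|: inr @: (g2 @: C).
  by rewrite imsetU -!imset_comp; congr (_ :|: _); apply: eq_imset.
have iso1 : misom g1.
  split=> [|B]; first by exists k1.
  rewrite -(@mindep_fp_inl P1 P2) -(@mindep_fp_inl Q1 Q2).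
  by have := phi_sum B set0; rewrite !imset0 !setU0 => <-; rewrite indep_phi.
split; first by exists g1.
exists g2; split=> [|C]; first by exists k2.
have [I [_ indI cardI]] := mrank_basis P1_0 [set: mtype P1].
have rankI : mrank I = mrankM P1 by rewrite mrank_indep.
have rank_g1I : mrank (g1 @: I) = mrankM Q1.
  rewrite (misom_mrank iso1) rankI /mrankM -(misom_mrank iso1).
  by rewrite (can2_imset_pre _ g1K k1K) preimsetT.
rewrite -(mnullity_eq0 Q2_0) -(mnullity_eq0 P2_0).
have := @mindep_fp_basis P1 P2 I C rankI; rewrite indI andTb => <-.
have := @mindep_fp_basis Q1 Q2 (g1 @: I) (g2 @: C) rank_g1I; rewrite iso1.2 indI andTb => <-.
by rewrite -phi_sum indep_phi.
Qed.

End Components.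

Arguments side_preserving : clear implicits.

Section SideIso.
Variables P1 P2 Q1 Q2 : matroid.
Local Notation X := (freeprod P1 P2).
Local Notation Y := (freeprod Q1 Q2).
Hypotheses (axX : matroid_axioms X) (axP1 : matroid_axioms P1) (axQ1 : matroid_axioms Q1).
Hypotheses (irrP1 : irreducible P1) (irrQ1 : irreducible Q1).
Hypotheses (P2_0 : mindep P2 set0) (Q2_0 : mindep Q2 set0).
Variables (f : mtype X -> mtype Y) (g : mtype Y -> mtype X).
Hypotheses (iso_f : misom f) (fK : cancel f g) (gK : cancel g f).

Let P1_0 : mindep P1 set0. Proof. by case: axP1. Qed.
Let Q1_0 : mindep Q1 set0. Proof. by case: axQ1. Qed.

Lemma splitting_preim_lside : splitting (f @^-1: lside Q1 Q2).
Proof.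
rewrite -(can2_imset_pre _ gK fK).
exact: (misom_splitting (misom_inv iso_f fK gK) (lside_splitting Q1_0 Q2_0)).
Qed.

Lemma nested_side_preserving :
  lside P1 P2 \subset f @^-1: lside Q1 Q2 -> side_preserving P1 P2 Q1 Q2 f.
Proof.
move=> sub; have sfS : f @: lside P1 P2 \subset lside Q1 Q2.
  by apply/subsetP => _ /imsetP[z zS ->]; have := subsetP sub z zS; rewrite inE.
have split_fS := misom_splitting iso_f (lside_splitting P1_0 P2_0).
case: (irreducible_lside_splitting axQ1 irrQ1 split_fS sfS) => [fS0|fSL].
  have := card_lside P1 P2; rewrite -(card_imset _ (can_inj fK)) fS0 cards0.
  by case: irrP1 => + _ => /[swap] <-.
by move=> z; rewrite -fSL mem_imset //; apply: can_inj fK.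
Qed.

Lemma disjoint_side_preserving_iso : [disjoint lside P1 P2 & f @^-1: lside Q1 Q2] ->
  exists phi, misom phi /\ side_preserving P1 P2 Q1 Q2 phi.
Proof.
move=> dis; have [X0 X_sub _] := axX.
have [|t St] := lside_singleton axP1 irrP1 P2_0 splitting_preim_lside dis.
  rewrite -(can2_imset_pre _ gK fK) (card_imset _ (can_inj gK)) card_lside.
  by case: irrQ1.
have dis' : [disjoint lside Q1 Q2 & f @: lside P1 P2].
  rewrite (can2_imset_pre _ fK gK) disjoint_subset; apply/subsetP => z zL.
  by rewrite !inE (disjointFl dis) // inE gK.
have split_fS := misom_splitting iso_f (lside_splitting P1_0 P2_0).
have [|u Su] := lside_singleton axQ1 irrQ1 Q2_0 split_fS dis'.
  by rewrite (card_imset _ (can_inj fK)) card_lside; case: irrP1.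
set a := inl t : mtype X; set b := g (inl u).
have eS' : f @^-1: lside Q1 Q2 = [set b] by rewrite Su -(can2_imset_pre _ gK fK) imset_set1.
have nab : a != b by move: dis; rewrite St eS' disjoints1 inE.
have split_a : splitting [set a] by rewrite -St; apply: lside_splitting.
have split_b : splitting [set b] by rewrite -eS'; apply: splitting_preim_lside.
exists (f \o tperm a b); split.
  exact: misom_comp (tperm_misom X0 X_sub nab split_a split_b) iso_f.
move=> z /=; rewrite St; move/setP/(_ (tperm a b z)): eS'; rewrite !inE => ->.
by rewrite -[b in _ == b](tpermL a b) (inj_eq perm_inj).
Qed.

Lemma side_preserving_iso : exists phi, misom phi /\ side_preserving P1 P2 Q1 Q2 phi.
Proof.
have [_ X_sub _] := axX.
have split_K := splittingI X_sub (lside_splitting P1_0 P2_0) splitting_preim_lside.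
case: (irreducible_lside_splitting axP1 irrP1 split_K (subsetIl _ _)) => [K0|KS].
  by apply: disjoint_side_preserving_iso; rewrite -setI_eq0 K0.
by exists f; split=> //; apply: nested_side_preserving; rewrite -KS subsetIr.
Qed.

End SideIso.

Lemma fp_cancel (P1 P2 Q1 Q2 : matroid) :
  matroid_axioms (freeprod P1 P2) -> matroid_axioms P1 -> matroid_axioms Q1 ->
  irreducible P1 -> irreducible Q1 -> mindep P2 set0 -> mindep Q2 set0 ->
  miso (freeprod P1 P2) (freeprod Q1 Q2) -> miso P1 Q1 /\ miso P2 Q2.
Proof.
move=> axX axP1 axQ1 irrP1 irrQ1 P2_0 Q2_0 [f iso_f]; have [g fK gK] := iso_f.1.
have [phi [iso_phi side_phi]] :=
  side_preserving_iso axX axP1 axQ1 irrP1 irrQ1 P2_0 Q2_0 iso_f fK gK.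
by apply: (misom_fp_components iso_phi side_phi); case: axP1.
Qed.

Lemma miso_fp_empty (M : matroid) : miso M (freeprod M empty_matroid).
Proof.
exists inl; split=> [|A]; last exact: mindep_fp_inl.
apply: inj_card_bij => [? ? [] //|].
by have := card_sum (mtype M) void; rewrite card_void addn0 => /eq_leq.
Qed.

Lemma miso_bigfp_cons (M : matroid) (s : seq matroid) :
  miso (bigfp (M :: s)) (freeprod M (bigfp s)).
Proof. by case: s => [|N s]; [apply: miso_fp_empty | apply: miso_refl]. Qed.

Lemma card_bigfp_cons (M : matroid) (s : seq matroid) :
  #|mtype (bigfp (M :: s))| = #|mtype M| + #|mtype (bigfp s)|.
Proof. by rewrite (miso_card (miso_bigfp_cons M s)) card_sum. Qed.

Lemma mindep_bigfp0 (s : seq matroid) :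
  (forall N, List.In N s -> mindep N set0) -> mindep (bigfp s) set0.
Proof.
case: s => [|M [|N s]] indep0 //=; first exact: indep0 M (or_introl erefl).
by apply: mindep_fp0; apply: indep0; left.
Qed.

Definition irreducible_factors (s : seq matroid) : Prop :=
  forall N, List.In N s -> matroid_axioms N /\ irreducible N.

Lemma irreducible_factors_cons (M : matroid) (s : seq matroid) :
  irreducible_factors (M :: s) ->
  [/\ matroid_axioms M, irreducible M, irreducible_factors s & mindep (bigfp s) set0].
Proof.
move=> irr_Ms; have [axM irrM] := irr_Ms M (or_introl erefl).
have irr_s : irreducible_factors s by move=> N sN; apply: irr_Ms; right.
by split=> //; apply: mindep_bigfp0 => N /irr_s[[]].
Qed.

Lemma card_bigfp_gt0 (M : matroid) (s : seq matroid) :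
  irreducible_factors (M :: s) -> 0 < #|mtype (bigfp (M :: s))|.
Proof.
case/irreducible_factors_cons=> _ [M_gt0 _] _ _.
by rewrite card_bigfp_cons; apply: leq_trans M_gt0 (leq_addr _ _).
Qed.

Lemma unique_factorization (ms ns : seq matroid) :
  irreducible_factors ms -> irreducible_factors ns ->
  matroid_axioms (bigfp ms) -> miso (bigfp ms) (bigfp ns) ->
  size ms = size ns /\
  forall i, i < size ms -> miso (nth empty_matroid ms i) (nth empty_matroid ns i).
Proof.
elim: ms ns => [|M ms IH] [|N ns] irr_ms irr_ns ax_ms iso_mn //.
- by have := card_bigfp_gt0 irr_ns; rewrite -(miso_card iso_mn) /= card_void.
- by have := card_bigfp_gt0 irr_ms; rewrite (miso_card iso_mn) /= card_void.
have [axM irrM irr_ms' ms0] := irreducible_factors_cons irr_ms.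
have [axN irrN irr_ns' ns0] := irreducible_factors_cons irr_ns.
have ax_fp := miso_axioms (miso_bigfp_cons M ms) ax_ms.
have iso_fp : miso (freeprod M (bigfp ms)) (freeprod N (bigfp ns)).
  exact: miso_trans (miso_sym (miso_bigfp_cons M ms)) (miso_trans iso_mn (miso_bigfp_cons N ns)).
have [isoMN iso_rest] := fp_cancel ax_fp axM axN irrM irrN ms0 ns0 iso_fp.
have [M0 _ _] := axM.
have [size_eq nth_iso] := IH ns irr_ms' irr_ns' (fp_right_axioms M0 ms0 ax_fp) iso_rest.
by split=> [|[|i]]; rewrite /= ?size_eq // ltnS -size_eq; apply: nth_iso.
Qed.

Unset Implicit Arguments.

Theorem theorem6p17 (M : matroid) (ms ns : seq matroid) :
  matroid_axioms M ->
  (forall Mi, List.In Mi ms -> matroid_axioms Mi /\ irreducible Mi) ->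
  (forall Nj, List.In Nj ns -> matroid_axioms Nj /\ irreducible Nj) ->
  miso M (bigfp ms) ->
  miso M (bigfp ns) ->
  size ms = size ns /\
  forall i, i < size ms -> miso (nth empty_matroid ms i) (nth empty_matroid ns i).
Proof.
move=> axM irr_ms irr_ns iso_ms iso_ns.
apply: unique_factorization irr_ms irr_ns (miso_axioms iso_ms axM) _.
exact: miso_trans (miso_sym iso_ms) iso_ns.
Qed.
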